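(* Let $X$ be an infinite dimensional Banach lattice in which $\ell_\infty$ is finitely lattice representable. Then $X_L=\ell_\infty$ with equality of norms.
   Context: Banach lattices are real; disjoint means $|x|\wedge|y|=0$. $\ell_\infty$ is finitely lattice representable in $X$ if for every $n$ and $\varepsilon>0$ there are pairwise disjoint $x_1,\dots,x_n\in X$ with $\max_i|a_i|\le\|\sum a_ix_i\|_X\le(1+\varepsilon)\max_i|a_i|$ for all $a\in\mathbb R^n$. $\mathfrak B_n(X)$ is the set of $n$-tuples of pairwise disjoint norm-one elements of $X$; for $a\in\mathbb R^n$, $\Phi_n(a):=\inf\{\|\sum_{i=1}^n a_ix_i\|_X:(x_i)\in\mathfrak B_n(X)\}$ and $\|a\|_{X_L(n)}:=\inf\{\sum_{k\in F}\Phi_n(a^k):F\text{ finite}, a^k\in\mathbb R^n, a=\sum_{k\in F}a^k\}$; $X_L$ is the space of real sequences $a$ with $\|a\|_{X_L}:=\sup_n\|(a_i)_{i=1}^n\|_{X_L(n)}<\infty$. *)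

From HB Require Import structures.
From mathcomp Require Import all_boot all_order all_algebra.
From mathcomp Require Import all_classical all_reals all_analysis.
Set Implicit Arguments. Unset Strict Implicit. Unset Printing Implicit Defensive.
Import Order.TTheory GRing.Theory Num.Theory.
Import numFieldNormedType.Exports.
Local Open Scope classical_set_scope.
Local Open Scope ring_scope.

Record banach_lattice (R : realType) (X : completeNormedModType R) := {
  ble : X -> X -> Prop;
  bjoin : X -> X -> X;
  ble_refl : forall x, ble x x;
  ble_antisym : forall x y, ble x y -> ble y x -> x = y;
  ble_trans : forall x y z, ble x y -> ble y z -> ble x z;
  ble_add : forall x y z, ble x y -> ble (x + z) (y + z);
  ble_scale : forall (a : R) x y, 0 <= a -> ble x y -> ble (a *: x) (a *: y);
  bjoin_ubl : forall x y, ble x (bjoin x y);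
  bjoin_ubr : forall x y, ble y (bjoin x y);
  bjoin_least : forall x y z, ble x z -> ble y z -> ble (bjoin x y) z;
  bnorm_lattice : forall x y,
    ble (bjoin x (- x)) (bjoin y (- y)) -> `|x| <= `|y|
}.

Section BL.
Variables (R : realType) (X : completeNormedModType R) (L : banach_lattice X).

Definition babs (x : X) : X := bjoin L x (- x).
Definition bmeet (x y : X) : X := - bjoin L (- x) (- y).
Definition bdisjoint (x y : X) : Prop := bmeet (babs x) (babs y) = 0.

Definition supnorm (n : nat) (a : 'I_n -> R) : R := \big[Num.max/0]_(i < n) `|a i|.

Definition linfty_flr : Prop :=
  forall (n : nat) (eps : R), 0 < eps ->
    exists x : 'I_n -> X,
      (forall i j : 'I_n, i != j -> bdisjoint (x i) (x j)) /\
      (forall a : 'I_n -> R,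
         supnorm a <= `|\sum_(i < n) a i *: x i| /\
         `|\sum_(i < n) a i *: x i| <= (1 + eps) * supnorm a).

Definition Bn (n : nat) : set ('I_n -> X) :=
  [set x | (forall i j : 'I_n, i != j -> bdisjoint (x i) (x j)) /\
           (forall i, `|x i| = 1)].

Definition Phi (n : nat) (a : 'I_n -> R) : R :=
  inf [set `|\sum_(i < n) a i *: x i| | x in @Bn n].

Definition XLn_norm (n : nat) (a : 'I_n -> R) : R :=
  inf [set \sum_(b <- s) Phi b |
        s in [set s : seq ('I_n -> R) | forall i, a i = \sum_(b <- s) b i]].

(* ||a||_{X_L} = sup_n ||(a_i)_{i<n}||_{X_L(n)}, in the extended reals
   (a is in X_L iff this is finite) *)
Definition XL_norm (a : nat -> R) : \bar R :=
  ereal_sup [set (XLn_norm (fun i : 'I_n => a (nat_of_ord i)))%:E | n in [set: nat]].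

End BL.

(* ||a||_infty = sup_i |a_i| in the extended reals (a in l_infty iff finite) *)
Definition linf_norm (R : realType) (a : nat -> R) : \bar R :=
  ereal_sup [set (`|a i|)%:E | i in [set: nat]].

Definition infinite_dimensional (R : realType) (X : normedModType R) : Prop :=
  forall n : nat, exists v : 'I_n -> X,
    forall c : 'I_n -> R, \sum_(i < n) c i *: v i = 0 -> forall i, c i = 0.

(* Finite lattice representability of l_infty gives, for every n and eps, a
   tuple in B_n(X) on which the norm is within (1 + eps) of the sup-norm,
   while disjointness alone gives the lower bound: in a Banach lattice
   |a_i x_i| <= |sum_j a_j x_j| for pairwise disjoint x_j.  Hence
   Phi_n = ||.||_infty, which is a norm, so the decomposition infimum
   defining X_L(n) is attained by the trivial decomposition, and taking the
   supremum over n gives the l_infty norm. *)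
From HB Require Import structures.
From mathcomp Require Import all_boot all_order all_algebra.
From mathcomp Require Import all_classical all_reals all_analysis.
Set Implicit Arguments. Unset Strict Implicit. Unset Printing Implicit Defensive.
Import Order.TTheory GRing.Theory Num.Theory.
Import numFieldNormedType.Exports.
Local Open Scope classical_set_scope.
Local Open Scope ring_scope.

Section VectorLattice.
Variables (R : realType) (X : completeNormedModType R) (L : banach_lattice X).
Local Notation le := (ble L).
Local Notation join := (bjoin L).
Local Notation meet := (bmeet L).
Local Notation abs := (babs L).

Lemma bleDl x y z : le x y -> le (z + x) (z + y).
Proof. by move=> h; rewrite ![z + _]addrC; apply: ble_add. Qed.

Lemma bleD a b c d : le a b -> le c d -> le (a + c) (b + d).
Proof.
move=> h1 h2; apply: (ble_trans (ble_add c h1)).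
exact: bleDl.
Qed.

Lemma bleN x y : le x y -> le (- y) (- x).
Proof.
move=> h; have := ble_add (- x - y) h.
by rewrite addrA subrr add0r (addrC y) subrK.
Qed.

Lemma bleNK x y : le (- y) (- x) -> le x y.
Proof. by move/bleN; rewrite !opprK. Qed.

Lemma bjoinC x y : join x y = join y x.
Proof.
by apply: ble_antisym; apply: bjoin_least; (apply: bjoin_ubl || apply: bjoin_ubr).
Qed.

Lemma bjoinDr x y z : join x y + z = join (x + z) (y + z).
Proof.
apply: ble_antisym; last first.
  by apply: bjoin_least; apply: ble_add; [apply: bjoin_ubl|apply: bjoin_ubr].
have h : le (join x y) (join (x + z) (y + z) - z).
  apply: bjoin_least.
    by have := ble_add (- z) (bjoin_ubl L (x + z) (y + z)); rewrite addrK.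
  by have := ble_add (- z) (bjoin_ubr L (x + z) (y + z)); rewrite addrK.
by have := ble_add z h; rewrite subrK.
Qed.

Lemma scaler_bjoin (m : R) x y : 0 <= m -> m *: join x y = join (m *: x) (m *: y).
Proof.
rewrite le_eqVlt => /orP [/eqP <-|m_gt0].
  rewrite !scale0r; apply: ble_antisym; first exact: bjoin_ubl.
  by apply: bjoin_least; apply: ble_refl.
apply: ble_antisym; last first.
  by apply: bjoin_least; apply: ble_scale; rewrite ?ltW //; [apply: bjoin_ubl|apply: bjoin_ubr].
have scaleVK z : m^-1 *: (m *: z) = z by rewrite scalerA mulVf ?gt_eqF // scale1r.
have mV_ge0 : 0 <= m^-1 by rewrite invr_ge0 ltW.
have h : le (join x y) (m^-1 *: join (m *: x) (m *: y)).
  apply: bjoin_least.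
    by have := ble_scale mV_ge0 (bjoin_ubl L (m *: x) (m *: y)); rewrite scaleVK.
  by have := ble_scale mV_ge0 (bjoin_ubr L (m *: x) (m *: y)); rewrite scaleVK.
by have := ble_scale (ltW m_gt0) h; rewrite scalerA mulfV ?gt_eqF // scale1r.
Qed.

Lemma bmeet_lel x y : le (meet x y) x.
Proof. by apply: bleNK; rewrite /bmeet opprK; apply: bjoin_ubl. Qed.

Lemma bmeet_ler x y : le (meet x y) y.
Proof. by apply: bleNK; rewrite /bmeet opprK; apply: bjoin_ubr. Qed.

Lemma bmeet_greatest x y z : le z x -> le z y -> le z (meet x y).
Proof.
move=> h1 h2; apply: bleNK; rewrite /bmeet opprK.
by apply: bjoin_least; apply: bleN.
Qed.

Lemma scaler_bmeet (m : R) x y : 0 <= m -> m *: meet x y = meet (m *: x) (m *: y).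
Proof. by move=> m_ge0; rewrite /bmeet scalerN scaler_bjoin // !scalerN. Qed.

Lemma bmeetSr r a b : le a b -> le (meet r a) (meet r b).
Proof.
move=> h; apply: bmeet_greatest; first exact: bmeet_lel.
exact: ble_trans (bmeet_ler _ _) h.
Qed.

Lemma bmeet_ge0 a b : le 0 a -> le 0 b -> le 0 (meet a b).
Proof. exact: bmeet_greatest. Qed.

Lemma addr_bjoin_bmeet x y : x + y = join x y + meet x y.
Proof.
rewrite /bmeet; have -> : join (- x) (- y) = join x y - x - y.
  rewrite -addrA bjoinDr bjoinC; congr join.
    by rewrite addrA subrr add0r.
  by rewrite addrCA subrr addr0.
by rewrite !opprD !opprK !addrA subrr add0r.
Qed.

Lemma babs_ge0 x : le 0 (abs x).
Proof.
have h : le (x + - x) (abs x + abs x) by apply: bleD; [apply: bjoin_ubl|apply: bjoin_ubr].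
rewrite subrr -mulr2n -scaler_nat in h.
have := ble_scale (_ : 0 <= 2%:R^-1) h.
by rewrite scaler0 scalerA mulVf ?pnatr_eq0 // scale1r; apply; rewrite invr_ge0.
Qed.

Lemma babsN x : abs (- x) = abs x.
Proof. by rewrite /babs opprK bjoinC. Qed.

Lemma babsZ (c : R) x : abs (c *: x) = `|c| *: abs x.
Proof.
case: (leP 0 c) => c0; first by rewrite ger0_norm // /babs scaler_bjoin // scalerN.
rewrite ltr0_norm // -babsN -scaleNr /babs scaler_bjoin ?oppr_ge0 ?ltW //.
by rewrite scalerN scaleNr opprK.
Qed.

Lemma babs0 : abs 0 = 0.
Proof. by rewrite -(scale0r 0) babsZ normr0 !scale0r. Qed.

Lemma babsD x y : le (abs (x + y)) (abs x + abs y).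
Proof.
apply: bjoin_least; first by apply: bleD; apply: bjoin_ubl.
by rewrite opprD; apply: bleD; apply: bjoin_ubr.
Qed.

Lemma bmeetD_le r p q : le 0 r -> le 0 p -> le 0 q ->
  le (meet r (p + q)) (meet r p + meet r q).
Proof.
move=> r0 p0 q0; set w := meet r (p + q).
suff h : le (w - meet r p) (meet r q).
  by have := ble_add (meet r p) h; rewrite subrK addrC.
apply: bmeet_greatest.
  have h := ble_add w (bleN (bmeet_ge0 r0 p0)); rewrite oppr0 add0r (addrC _ w) in h.
  exact: ble_trans h (bmeet_lel _ _).
rewrite /bmeet opprK addrC bjoinDr; apply: bjoin_least.
  apply: ble_trans q0; have := ble_add (- r) (bmeet_lel r (p + q)).
  by rewrite -/w subrr addrC.
by have := ble_add (- p) (bmeet_ler r (p + q)); rewrite -/w (addrC p q) addrK addrC.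
Qed.

(* Both |u| - |v| and |v| - |u| lie below |u + v|, and their join is
   |u| + |v| once |u| /\ |v| = 0. *)
Lemma bdisjoint_babs_le u v : bdisjoint L u v -> le (abs u) (abs (u + v)).
Proof.
rewrite /bdisjoint => uv.
set p := abs u; set q := abs v.
have pq : p + q = join p q by rewrite addr_bjoin_bmeet uv addr0.
have pBq : le (p - q) (abs (u + v)).
  have := babsD (u + v) (- v); rewrite addrK babsN -/p -/q => h.
  by have := ble_add (- q) h; rewrite addrK.
have qBp : le (q - p) (abs (u + v)).
  have := babsD (u + v) (- u); rewrite (addrC u) addrK babsN -/p -/q => h.
  by have := ble_add (- p) h; rewrite addrK.
have join_diff : join (p - q) (q - p) = p + q.
  have e (a b : X) : a - b = 2%:R *: a - (a + b).
    by rewrite scaler_nat mulr2n opprD addrA addrK.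
  rewrite (e p q) (e q p) (addrC q p) -bjoinDr -scaler_bjoin ?ler0n //.
  by rewrite -pq scaler_nat mulr2n addrK.
have pDq : le (p + q) (abs (u + v)) by rewrite -join_diff; apply: bjoin_least.
apply: ble_trans pDq; have := bleDl p (babs_ge0 v); by rewrite addr0.
Qed.

Lemma bdisjointZ u v (c d : R) : bdisjoint L u v -> bdisjoint L (c *: u) (d *: v).
Proof.
rewrite /bdisjoint !babsZ => uv.
set m := `|c| + `|d|.
have m_ge0 : 0 <= m by rewrite addr_ge0.
have scale_le (k k' : R) z : 0 <= k' -> le (k *: abs z) ((k + k') *: abs z).
  move=> k'0; have := bleDl (k *: abs z) (ble_scale k'0 (babs_ge0 z)).
  by rewrite scaler0 addr0 -scalerDl.
have hc : le (`|c| *: abs u) (m *: abs u) by apply: scale_le.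
have hd : le (`|d| *: abs v) (m *: abs v) by rewrite /m addrC; apply: scale_le.
apply: (@ble_antisym _ _ L).
  have : le (meet (`|c| *: abs u) (`|d| *: abs v)) (m *: meet (abs u) (abs v)).
    rewrite scaler_bmeet //; apply: bmeet_greatest.
      exact: ble_trans (bmeet_lel _ _) hc.
    exact: ble_trans (bmeet_ler _ _) hd.
  by rewrite uv scaler0.
have scale_ge0 (k : R) z : le 0 (`|k| *: abs z).
  by rewrite -(scaler0 _ `|k|); apply: ble_scale => //; apply: babs_ge0.
by apply: bmeet_ge0; apply: scale_ge0.
Qed.

Lemma bdisjoint0 u : bdisjoint L u 0.
Proof.
rewrite /bdisjoint babs0; apply: (@ble_antisym _ _ L); first exact: bmeet_ler.
by apply: bmeet_ge0; [apply: babs_ge0|apply: ble_refl].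
Qed.

Lemma bdisjointD u v w : bdisjoint L u v -> bdisjoint L u w -> bdisjoint L u (v + w).
Proof.
rewrite /bdisjoint => uv uw.
apply: (@ble_antisym _ _ L); last by apply: bmeet_ge0; apply: babs_ge0.
apply: ble_trans (bmeetSr _ (babsD v w)) _.
by have := bmeetD_le (babs_ge0 u) (babs_ge0 v) (babs_ge0 w); rewrite uv uw addr0.
Qed.

Lemma bdisjoint_sum n (x : 'I_n -> X) (a : 'I_n -> R) i :
  (forall j, j != i -> bdisjoint L (x i) (x j)) ->
  bdisjoint L (x i) (\sum_(j < n | j != i) a j *: x j).
Proof.
move=> xi; elim/big_ind: _; [exact: bdisjoint0 | exact: bdisjointD |].
by move=> j ji; rewrite -[x i]scale1r; apply: bdisjointZ; apply: xi.
Qed.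

End VectorLattice.

Section SupNorm.
Variable R : realType.

Lemma supnorm_ge n (a : 'I_n -> R) i : `|a i| <= supnorm a.
Proof. exact: le_bigmax. Qed.

Lemma supnorm_le n (a : 'I_n -> R) c : 0 <= c -> (forall i, `|a i| <= c) -> supnorm a <= c.
Proof. by move=> c_ge0 h; apply: bigmax_le. Qed.

Lemma supnorm_ge0 n (a : 'I_n -> R) : 0 <= supnorm a.
Proof. by rewrite /supnorm; elim/big_ind: _ => // x y x0 y0; rewrite le_max x0. Qed.

Lemma supnorm_sum_le n (s : seq ('I_n -> R)) :
  supnorm (fun i => \sum_(b <- s) b i) <= \sum_(b <- s) supnorm b.
Proof.
elim: s => [|b s IH].
  by rewrite big_nil; apply: supnorm_le => // i; rewrite big_nil normr0.
rewrite big_cons; apply: supnorm_le.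
  by apply: addr_ge0; [apply: supnorm_ge0|apply: sumr_ge0 => *; apply: supnorm_ge0].
move=> i; rewrite big_cons; apply: le_trans (ler_normD _ _) _.
apply: lerD; first exact: supnorm_ge.
exact: le_trans (supnorm_ge (fun i => \sum_(b <- s) b i) i) IH.
Qed.

Lemma supnorm_delta n (i : 'I_n) : supnorm (fun j : 'I_n => ((j == i)%:R : R)) = 1.
Proof.
apply: le_anti; apply/andP; split.
  by apply: supnorm_le => // j; case: (j == i); rewrite ?normr1 ?normr0.
by have := supnorm_ge (fun j : 'I_n => ((j == i)%:R : R)) i; rewrite eqxx normr1.
Qed.

Lemma ereal_sup_supnorm_prefix (a : nat -> R) :
  ereal_sup [set (supnorm (fun i : 'I_n => a i))%:E | n in [set: nat]] =
  ereal_sup [set (`|a i|)%:E | i in [set: nat]].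
Proof.
apply: le_anti; apply/andP; split.
  apply: ge_ereal_sup => z [[|n] _ <-].
    rewrite /supnorm big_ord0.
    apply: le_trans (ereal_sup_ubound (ex_intro2 _ _ 0%N I erefl)).
    by rewrite lee_fin.
  rewrite /supnorm; have [i _ ->] := @eq_bigmax _ _ _ 0 (@ord0 n) predT
    (fun i : 'I_n.+1 => `|a i|) isT (fun i _ => normr_ge0 _).
  exact: ereal_sup_ubound (ex_intro2 _ _ (nat_of_ord i) I erefl).
apply: ge_ereal_sup => z [i _ <-].
apply: le_trans (ereal_sup_ubound (ex_intro2 _ _ i.+1 I erefl)).
by rewrite lee_fin; apply: (supnorm_ge (fun j : 'I_i.+1 => a j) ord_max).
Qed.

End SupNorm.

Section Representability.
Variables (R : realType) (X : completeNormedModType R) (L : banach_lattice X).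

Lemma supnorm_le_Bn n (x : 'I_n -> X) a : Bn L x -> supnorm a <= `|\sum_i a i *: x i|.
Proof.
case=> x_disj x_norm; apply: supnorm_le => // i.
rewrite (bigD1 i) //= -[`|a i|]mulr1 -(x_norm i) -normrZ.
apply: bnorm_lattice; apply: bdisjoint_babs_le.
rewrite -[\sum_(j | _) _]scale1r; apply: bdisjointZ.
by apply: bdisjoint_sum => j ji; apply: x_disj; rewrite eq_sym.
Qed.

Hypothesis flr : linfty_flr L.

Lemma linfty_flr_Bn n eps : 0 < eps ->
  exists y : 'I_n -> X, Bn L y /\
    forall a, `|\sum_i a i *: y i| <= (1 + eps) * supnorm a.
Proof.
move=> eps_gt0; have [x [x_disj x_bnd]] := @flr n eps eps_gt0.
have x_norm i : 1 <= `|x i| <= 1 + eps.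
  have sum_delta : \sum_j ((j == i)%:R : R) *: x j = x i.
    rewrite (bigD1 i) //= eqxx scale1r big1 ?addr0 // => j /negbTE ->.
    by rewrite scale0r.
  have := x_bnd (fun j => (j == i)%:R); rewrite /= sum_delta supnorm_delta mulr1.
  by move=> [-> ->].
have x_gt0 i : 0 < `|x i| by have /andP [h _] := x_norm i; apply: lt_le_trans h.
exists (fun i => `|x i|^-1 *: x i); split.
  split=> [i j ij|i]; first by apply: bdisjointZ; apply: x_disj.
  by rewrite normrZ normfV normr_id mulVf // gt_eqF.
move=> a; under eq_bigr do rewrite scalerA.
have [_ hi] := x_bnd (fun i => a i / `|x i|).
apply: le_trans hi _; apply: ler_wpM2l; first by rewrite addr_ge0 // ltW.
apply: supnorm_le; first exact: supnorm_ge0.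
move=> i; rewrite normrM normfV normr_id ler_pdivrMr //.
apply: le_trans (supnorm_ge a i) _; apply: ler_peMr; first exact: supnorm_ge0.
by have /andP [] := x_norm i.
Qed.

Lemma PhiE n (a : 'I_n -> R) : Phi L a = supnorm a.
Proof.
rewrite /Phi; set S := [set `|_| | x in _].
have S_lb : has_lbound S by exists 0 => z [x _ <-].
apply: le_anti; apply/andP; split.
  apply/ler_addgt0Pr => e e_gt0.
  have s_ge0 := supnorm_ge0 a.
  have s1_gt0 : 0 < supnorm a + 1 by apply: ltr_wpDl.
  have [y [yB y_bnd]] := linfty_flr_Bn n (divr_gt0 e_gt0 s1_gt0).
  apply: le_trans (ge_inf S_lb (ex_intro2 _ _ y yB erefl)) _.
  apply: le_trans (y_bnd a) _; rewrite mulrDl mul1r lerD2l.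
  by rewrite mulrAC ler_pdivrMr // mulrDr mulr1 lerDl ltW.
have [y [yB _]] := linfty_flr_Bn n (ltr01 : (0 : R) < 1).
apply: lb_le_inf; first by exists (`|\sum_i a i *: y i|); exists y.
by move=> z [x xB <-]; apply: supnorm_le_Bn.
Qed.

Lemma XLn_normE n (a : 'I_n -> R) : XLn_norm L a = supnorm a.
Proof.
rewrite /XLn_norm; set S := [set _ | s in _].
have a_in : S (supnorm a).
  by exists [:: a]; [move=> i; rewrite big_seq1 | rewrite big_seq1 PhiE].
apply: le_anti; apply/andP; split.
  apply: ge_inf a_in; exists 0 => z [s _ <-].
  by apply: sumr_ge0 => b _; rewrite PhiE; apply: supnorm_ge0.
apply: lb_le_inf; first by exists (supnorm a).
move=> z [s s_dec <-]; under eq_bigr do rewrite PhiE.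
by rewrite (funext s_dec); apply: supnorm_sum_le.
Qed.

End Representability.

Theorem mainTheorem16 (R : realType) (X : completeNormedModType R)
    (L : banach_lattice X) :
  infinite_dimensional X -> linfty_flr L ->
  forall a : nat -> R, XL_norm L a = linf_norm a.
Proof.
move=> _ flr a; rewrite /XL_norm /linf_norm -ereal_sup_supnorm_prefix.
by congr ereal_sup; apply: eq_imagel => n _; rewrite XLn_normE.
Qed.
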